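(* Let $A$ be a finite alphabet, $R$ a symmetric relation on $A$ (set of pairs $(a,b)$), and $I$ a finite set of circular words over $A$; let $S=(A,I,R)$ be the $(1,3)$-CSSH circular splicing system with rules $a\#1\$b\#1$ for $(a,b)\in R$. Then the flat splicing system $\mathcal{S}=(A,Y,R')$ with $Y=Lin(I)$ and $R'=\{\langle a\mid 1-1\mid b\rangle : (a,b)\in R\}$ satisfies $L(\mathcal{S})=Lin(L(S))$. Conversely, let $\mathcal{S}=(A,Y,R')$ be a flat splicing system where $Y\subseteq A^+$ is a finite language closed under the conjugacy relation, $R'=\{\langle a\mid 1-1\mid b\rangle : (a,b)\in R\}$ and $R$ is a symmetric relation on $A$. Let $I=\sim Y$. Then $L(\mathcal{S})=Lin(L(S))$, where $S=(A,I,R)$ is the $(1,3)$-CSSH system with rules $a\#1\$b\#1$ for $(a,b)\in R$.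
   Context: $1$ denotes the empty word, $A^+=A^*\setminus\{1\}$. Conjugacy: $xy\sim yx$; a circular word $\sim w$ is the conjugacy class of $w$; for a set $L$ of circular words, $Lin(L)=\{w\in A^*:\ \sim w\in L\}$; for $Y\subseteq A^*$, $\sim Y=\{\sim w:w\in Y\}$. $(1,3)$-CSSH circular splicing: the rule $a\#1\$b\#1$ (with $a,b$ letters) applied to circular words $\sim xa$ and $\sim yb$ produces $\sim xayb$. $L(S)$ is the smallest set of circular words containing $I$ and closed under applying rules of $R$ to any two of its elements. Flat splicing system $\mathcal{S}=(A,Y,R')$: rules $\langle\alpha\mid\beta-\gamma\mid\delta\rangle$; applying it to $u=x\alpha\beta y$ and $v=\gamma z\delta$ yields $x\alpha\gamma z\delta\beta y$. In particular $\langle a\mid1-1\mid b\rangle$ applied to $u=xay$ and $v=zb$ yields $xazby$. $L(\mathcal{S})$ is the smallest language containing $Y$ and closed under applying rules of $R'$. *)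

From mathcomp Require Import all_boot.
From mathcomp Require Import zify.
Set Implicit Arguments. Unset Strict Implicit. Unset Printing Implicit Defensive.

Section Words.
Variable A : finType.

Definition conjb (u v : seq A) : bool :=
  [exists i : 'I_(size u).+1, rot i u == v].

Lemma conjbP u v : reflect (exists x y, u = x ++ y /\ v = y ++ x) (conjb u v).
Proof.
apply: (iffP existsP) => [[i /eqP <-]|[x [y [-> ->]]]].
  by exists (take i u), (drop i u); rewrite cat_take_drop.
have hi : size x < (size (x ++ y)).+1 by rewrite size_cat; lia.
by exists (Ordinal hi); rewrite /= rot_size_cat.
Qed.

Lemma conjb_refl u : conjb u u.
Proof. by apply/conjbP; exists [::], u; rewrite cats0. Qed.

Lemma conjb_sym u v : conjb u v -> conjb v u.
Proof. by move/conjbP=> [x [y [-> ->]]]; apply/conjbP; exists y, x. Qed.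

Lemma conjb_trans u v w : conjb u v -> conjb v w -> conjb u w.
Proof.
move=> /existsP [i /eqP <-] /existsP [j /eqP <-].
have h : rot_add u i j < (size u).+1 by rewrite ltnS leq_rot_add.
by apply/existsP; exists (Ordinal h); rewrite /= rot_rot_add.
Qed.

Definition canon (w : seq A) : seq A := choose (conjb w) w.

Lemma canon_conj w : conjb w (canon w).
Proof. exact: (chooseP (conjb_refl w)). Qed.

Lemma canon_eq u v : conjb u v -> canon u = canon v.
Proof.
move=> huv; rewrite /canon (@eq_choose _ (conjb u) (conjb v)).
  by apply: choose_id; [exact: conjb_sym | exact: conjb_refl].
move=> x; apply/idP/idP => h.
  exact: conjb_trans (conjb_sym huv) h.
exact: conjb_trans huv h.
Qed.

Lemma canon_idem w : canon (canon w) == canon w.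
Proof. by apply/eqP; apply: canon_eq; apply: conjb_sym; apply: canon_conj. Qed.

(* circular words = conjugacy classes, represented by canonical representatives *)
Definition circw : Type := {w : seq A | canon w == w}.

Definition cw (w : seq A) : circw := exist _ (canon w) (canon_idem w).

Definition Lin (L : circw -> Prop) : seq A -> Prop := fun w => L (cw w).

(* L(S) for the (1,3)-CSSH circular splicing system S = (A, I, R),
   rules a#1$b#1 for (a,b) in R:  ~xa, ~yb  |->  ~xayb *)
Inductive LcircS (I : circw -> Prop) (R : rel A) : circw -> Prop :=
  | LcircS_init c : I c -> LcircS I R c
  | LcircS_step x a y b : R a b ->
      LcircS I R (cw (rcons x a)) -> LcircS I R (cw (rcons y b)) ->
      LcircS I R (cw (rcons x a ++ rcons y b)).

(* L(S') for the flat splicing system S' = (A, Y, R'),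
   R' = { <a|1-1|b> : (a,b) in R }:  u = x a y, v = z b  |->  x a z b y *)
Inductive LflatS (Y : seq A -> Prop) (R : rel A) : seq A -> Prop :=
  | LflatS_init w : Y w -> LflatS Y R w
  | LflatS_step x a y z b : R a b ->
      LflatS Y R (x ++ a :: y) -> LflatS Y R (rcons z b) ->
      LflatS Y R (x ++ a :: (z ++ b :: y)).

End Words.

(* A flat step [x a y, z b |-> x a z b y] is, up to
   conjugacy, the circular step [~(y x a), ~(z b) |-> ~(y x a z b)], which
   gives one inclusion.  Conversely, every rotation of the product
   [x a y b] of a circular step either cuts inside [x a], and is then a flat
   insertion of [y b] after [a] into a rotation of [x a], or cuts inside
   [y b], and is then a flat insertion of [x a] after [b] into a rotation of
   [y b]; symmetry of [R] covers the second case. *)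
From mathcomp Require Import all_boot.
Set Implicit Arguments. Unset Strict Implicit.

Lemma cat_eq_cat_cases (T : Type) (s1 s2 t1 t2 : seq T) :
  s1 ++ s2 = t1 ++ t2 ->
  exists m, (s1 = t1 ++ m /\ t2 = m ++ s2) \/ (t1 = s1 ++ m /\ s2 = m ++ t2).
Proof.
elim: s1 t1 => [|x s1 IH] [|y t1] /=; first by exists [::]; right.
- by move=> ->; exists (y :: t1); right.
- by move=> <-; exists (x :: s1); left.
case=> -> /IH [m [[-> ->] | [-> ->]]]; exists m; by [left | right].
Qed.

Section CircularFlat.
Variable A : finType.
Implicit Types u v w x y : seq A.

Lemma conjb_catC x y : conjb (x ++ y) (y ++ x).
Proof. by apply/conjbP; exists x, y. Qed.

Lemma cw_conjb u v : conjb u v -> cw u = cw v.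
Proof. by move=> huv; apply: val_inj; exact: canon_eq. Qed.

Lemma cw_catC x y : cw (x ++ y) = cw (y ++ x).
Proof. exact/cw_conjb/conjb_catC. Qed.

Lemma conjb_cw u v : cw u = cw v -> conjb u v.
Proof.
move/(congr1 val) => /= huv.
have hu := canon_conj u; rewrite huv in hu.
exact: conjb_trans hu (conjb_sym (canon_conj v)).
Qed.

Lemma conjb_rcons_cat_cases x a y b w :
  conjb (rcons x a ++ rcons y b) w ->
  (exists x1 x2, x = x1 ++ x2 /\ w = x2 ++ a :: y ++ b :: x1) \/
  (exists y1 y2, y = y1 ++ y2 /\ w = y2 ++ b :: x ++ a :: y1).
Proof.
move/conjbP=> [p [q [hpq ->]]]; rewrite cat_rcons in hpq.
have {hpq} [m [[hx hq] | [hp hm]]] := cat_eq_cat_cases hpq.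
  by left; exists p, m; rewrite hx hq -catA /= cat_rcons.
case: m hp hm => [|c m] -> /= hm.
  by left; exists x, [::]; rewrite cats0 -hm /= cat_rcons.
case: hm => <- {c}; case/lastP: q => [|q c].
  by rewrite cats0 => <-; left; exists [::], x; rewrite cats1.
rewrite -rcons_cat => /eqP; rewrite eqseq_rcons => /andP [/eqP -> /eqP <-].
by right; exists m, q; rewrite -cats1 -!catA.
Qed.

Variables (R : rel A) (Y : seq A -> Prop) (I : circw A -> Prop).
Hypothesis YI : forall w, Y w <-> I (cw w).

Lemma LcircS_of_LflatS w : LflatS Y R w -> LcircS I R (cw w).
Proof.
elim=> [v /YI | x a y z b hab _ IHu _ IHv]; first exact: LcircS_init.
have -> : cw (x ++ a :: z ++ b :: y) = cw (rcons (y ++ x) a ++ rcons z b).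
  by rewrite rcons_cat -catA [RHS]cw_catC -catA !cat_rcons.
apply: LcircS_step => //.
by rewrite rcons_cat -cw_catC cat_rcons.
Qed.

Hypothesis R_sym : symmetric R.

Lemma LflatS_of_LcircS c : LcircS I R c -> forall w, cw w = c -> LflatS Y R w.
Proof.
elim=> [c0 hc w hw | x a y b hab _ IHx _ IHy w hw].
  by apply: LflatS_init; apply/YI; rewrite hw.
case: (conjb_rcons_cat_cases (conjb_cw (esym hw))).
  move=> [x1 [x2 [hx ->]]]; apply: LflatS_step => //; last exact: IHy.
  by apply: IHx; rewrite hx rcons_cat [RHS]cw_catC cat_rcons.
move=> [y1 [y2 [hy ->]]]; apply: LflatS_step; first by rewrite R_sym.
  by apply: IHy; rewrite hy rcons_cat [RHS]cw_catC cat_rcons.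
exact: IHx.
Qed.

Lemma LflatS_Lin_LcircS w : LflatS Y R w <-> Lin (LcircS I R) w.
Proof. by split=> [|h]; [exact: LcircS_of_LflatS | exact: LflatS_of_LcircS h _ _]. Qed.

End CircularFlat.

Theorem proposition11p7 (A : finType) (R : rel A) (hR : symmetric R) :
  (* direct part: I a finite set of circular words, Y = Lin(I) *)
  (forall I : seq (circw A),
     forall w : seq A,
       LflatS (Lin (fun c => c \in I)) R w <-> Lin (LcircS (fun c => c \in I) R) w)
  /\
  (* converse: Y finite, Y ⊆ A^+, Y closed under conjugacy, I = ~Y *)
  (forall Y : seq (seq A),
     (forall u, u \in Y -> u != [::]) ->
     (forall u v, conjb u v -> u \in Y -> v \in Y) ->
     forall w : seq A,
       LflatS (fun u => u \in Y) R w
       <-> Lin (LcircS (fun c => c \in map (@cw A) Y) R) w).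
Proof.
split=> [I w | Y _ Y_conj w]; apply: LflatS_Lin_LcircS => // u.
split=> [|/mapP [v hv /esym/conjb_cw huv]]; first exact: map_f.
exact: Y_conj hv.
Qed.
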